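(* Fix $s,\mu>0$ and let $f_{s,\mu}$ be the repressilator vector field $\dot x=\frac{\mu}{1+y^s}-x$, $\dot y=\frac{\mu}{1+z^s}-y$, $\dot z=\frac{\mu}{1+x^s}-z$ on the closed positive orthant $\mathbb{R}^3_+=\{x,y,z\ge0\}$. Then $d\theta(f_{s,\mu})>0$ on $\mathbb{R}^3_+\setminus\Delta$.
   Context: $\Delta:=\mathrm{span}\{(1,1,1)\}\subset\mathbb{R}^3$ is the diagonal. For $\mathbf{x}=(x,y,z)$, $\mathbf{x}_\perp$ denotes the orthogonal projection of $\mathbf{x}$ onto $\Delta^\perp$, so $\|\mathbf{x}_\perp\|^2=\tfrac23(x^2+y^2+z^2-xy-yz-zx)$. The closed 1-form $d\theta$ on $\mathbb{R}^3\setminus\Delta$ is $$d\theta:=\frac{1}{\sqrt3}\,\frac{(z-y)\,dx+(x-z)\,dy+(y-x)\,dz}{\|\mathbf{x}_\perp\|^2}.$$ *)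

From Stdlib Require Import Reals Lra.
Open Scope R_scope.

(* Real power x^s for x >= 0 and s > 0, with the convention 0^s = 0
   (Stdlib's Rpower 0 s is exp (s * ln 0) = 1, which is wrong here). *)
Definition rpow (x s : R) : R := if Rle_dec x 0 then 0 else Rpower x s.

Definition hill (s mu u : R) : R := mu / (1 + rpow u s).

Definition rep_fx (s mu x y z : R) : R := hill s mu y - x.
Definition rep_fy (s mu x y z : R) : R := hill s mu z - y.
Definition rep_fz (s mu x y z : R) : R := hill s mu x - z.

(* ||x_perp||^2 : squared norm of the projection onto the orthogonal
   complement of the diagonal. *)
Definition perp_sq (x y z : R) : R :=
  2 / 3 * (x ^ 2 + y ^ 2 + z ^ 2 - x * y - y * z - z * x).

Definition dtheta (x y z vx vy vz : R) : R :=
  / sqrt 3 * (((z - y) * vx + (x - z) * vy + (y - x) * vz) / perp_sq x y z).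

Definition on_diagonal (x y z : R) : Prop := x = y /\ y = z.

From Stdlib Require Import Reals Lra Psatz.
Open Scope R_scope.

(* Write h for the Hill function u |-> mu/(1+u^s), strictly
   decreasing on [0,oo).  In the numerator of dtheta(f) the terms coming
   from the linear part -x, -y, -z of f cancel, leaving the cyclic form
     C_h(x,y,z) = (y-x) h(x) + (z-y) h(y) + (x-z) h(z),
   which is invariant under cyclic rotation of (x,y,z).  Rotating so that x
   is the smallest coordinate, C_h = (y-x)(h x - h z) + (z-y)(h y - h z),
   a sum of two products each nonnegative because h is decreasing; they
   cannot both vanish off the diagonal.  The denominator ||x_perp||^2 is a
   sum of squares of differences, hence positive off the diagonal.
   The file first proves the facts about rpow and the Hill function, then
   the positivity of C_h for an arbitrary strictly decreasing h, then the
   two facts about dtheta, and finally the theorem. *)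

Lemma rpow_nonneg (u s : R) : 0 <= rpow u s.
Proof.
  unfold rpow; destruct (Rle_dec u 0); [lra | left; apply exp_pos].
Qed.

Lemma rpow_lt (u v s : R) : 0 < s -> 0 <= u -> u < v -> rpow u s < rpow v s.
Proof.
  intros hs hu huv; unfold rpow.
  destruct (Rle_dec v 0); [lra |].
  destruct (Rle_dec u 0).
  - apply exp_pos.
  - apply Rlt_Rpower_l; lra.
Qed.

Lemma hill_lt (s mu u v : R) :
  0 < s -> 0 < mu -> 0 <= u -> u < v -> hill s mu v < hill s mu u.
Proof.
  intros hs hmu hu huv; unfold hill.
  pose proof (rpow_lt u v s hs hu huv); pose proof (rpow_nonneg u s).
  apply Rmult_lt_compat_l; [exact hmu |].
  apply Rinv_lt_contravar; nra.
Qed.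

Definition cyc_form (h : R -> R) (x y z : R) : R :=
  (y - x) * h x + (z - y) * h y + (x - z) * h z.

Lemma cyc_form_rotate (h : R -> R) (x y z : R) :
  cyc_form h x y z = cyc_form h y z x.
Proof. unfold cyc_form; ring. Qed.

Lemma on_diagonal_rotate (x y z : R) :
  on_diagonal x y z <-> on_diagonal y z x.
Proof. unfold on_diagonal; split; intros [? ?]; split; congruence. Qed.

Section DecreasingCyclicForm.

Variable h : R -> R.
Hypothesis h_decr : forall u v, 0 <= u -> u < v -> h v < h u.

Lemma decr_pair_pos (u v : R) :
  0 <= u -> 0 <= v -> u <> v -> 0 < (v - u) * (h u - h v).
Proof.
  intros hu hv huv; destruct (Rtotal_order u v) as [luv | [? | lvu]].
  - pose proof (h_decr u v hu luv); nra.
  - contradiction.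
  - pose proof (h_decr v u hv lvu); nra.
Qed.

(* When x is a minimal coordinate, C_h splits into two nonnegative products,
   one of which is positive off the diagonal. *)
Lemma cyc_form_pos_at_min (x y z : R) :
  0 <= x -> x <= y -> x <= z -> ~ on_diagonal x y z -> 0 < cyc_form h x y z.
Proof.
  intros hx hxy hxz hnd.
  assert (Hsplit : cyc_form h x y z
                   = (y - x) * (h x - h z) + (z - y) * (h y - h z))
    by (unfold cyc_form; ring).
  assert (Hxz : 0 <= h x - h z).
  { destruct (Req_dec x z) as [<- | nxz]; [lra |].
    left; apply Rgt_minus, h_decr; lra. }
  assert (Hfirst : 0 <= (y - x) * (h x - h z)) by (apply Rmult_le_pos; lra).
  rewrite Hsplit.
  destruct (Req_dec y z) as [<- | nyz].
  - assert (nxy : x <> y) by (intros <-; apply hnd; split; reflexivity).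
    pose proof (decr_pair_pos x y hx ltac:(lra) nxy); lra.
  - pose proof (decr_pair_pos y z ltac:(lra) ltac:(lra) nyz); lra.
Qed.

(* By cyclic invariance, C_h is positive on the orthant off the diagonal:
   rotate a minimal coordinate into first position. *)
Lemma cyc_form_pos (x y z : R) :
  0 <= x -> 0 <= y -> 0 <= z -> ~ on_diagonal x y z -> 0 < cyc_form h x y z.
Proof.
  intros hx hy hz hnd.
  assert (hnd' : ~ on_diagonal y z x) by (now rewrite <- on_diagonal_rotate).
  assert (hnd'' : ~ on_diagonal z x y) by (now rewrite <- on_diagonal_rotate).
  destruct (Rle_dec x y), (Rle_dec x z), (Rle_dec y z).
  all: first
    [ apply cyc_form_pos_at_min; auto; lra
    | rewrite cyc_form_rotate; apply cyc_form_pos_at_min; auto; lra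
    | rewrite 2!cyc_form_rotate; apply cyc_form_pos_at_min; auto; lra ].
Qed.

End DecreasingCyclicForm.

Lemma perp_sq_pos (x y z : R) : ~ on_diagonal x y z -> 0 < perp_sq x y z.
Proof.
  intros hnd.
  assert (Hsos : perp_sq x y z = / 3 * ((x - y) ^ 2 + (y - z) ^ 2 + (z - x) ^ 2))
    by (unfold perp_sq; field).
  rewrite Hsos; apply Rmult_lt_0_compat; [lra |].
  pose proof (pow2_ge_0 (x - y)); pose proof (pow2_ge_0 (y - z));
    pose proof (pow2_ge_0 (z - x)).
  destruct (Req_dec x y) as [<- | nxy].
  - assert (nyz : x <> z) by (intros <-; apply hnd; split; reflexivity).
    assert (0 < (x - z) ^ 2) by (rewrite <- Rsqr_pow2; apply Rsqr_pos_lt; lra); lra.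
  - assert (0 < (x - y) ^ 2) by (rewrite <- Rsqr_pow2; apply Rsqr_pos_lt; lra); lra.
Qed.

Lemma dtheta_numerator_rep (s mu x y z : R) :
  (z - y) * rep_fx s mu x y z + (x - z) * rep_fy s mu x y z
    + (y - x) * rep_fz s mu x y z
  = cyc_form (hill s mu) x y z.
Proof. unfold rep_fx, rep_fy, rep_fz, cyc_form; ring. Qed.

Lemma dtheta_pos (x y z vx vy vz : R) :
  0 < perp_sq x y z ->
  0 < (z - y) * vx + (x - z) * vy + (y - x) * vz ->
  0 < dtheta x y z vx vy vz.
Proof.
  intros hp hn; unfold dtheta, Rdiv.
  assert (0 < sqrt 3) by (apply sqrt_lt_R0; lra).
  apply Rmult_lt_0_compat; [now apply Rinv_0_lt_compat |].
  apply Rmult_lt_0_compat; [exact hn | now apply Rinv_0_lt_compat].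
Qed.

Theorem lemma7 (s mu : R) (hs : 0 < s) (hmu : 0 < mu)
  (x y z : R) (hx : 0 <= x) (hy : 0 <= y) (hz : 0 <= z)
  (hnd : ~ on_diagonal x y z) :
  0 < dtheta x y z (rep_fx s mu x y z) (rep_fy s mu x y z) (rep_fz s mu x y z).
Proof.
  apply dtheta_pos; [now apply perp_sq_pos |].
  rewrite dtheta_numerator_rep.
  apply cyc_form_pos; auto.
  intros u v hu huv; now apply hill_lt.
Qed.
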